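(* Let $D\ge1$ and let $\mathcal{F}$ be a collection of pairwise non-overlapping $D$-simplices on $\gamma_D$ whose vertex sets have union exactly $A$, $|A|=n$, and suppose $\mathcal{F}$ is non-extendable. Then there is a collection $\mathcal{F}'\supseteq\mathcal{F}$ of pairwise non-overlapping $D$-simplices on $\gamma_D$ whose vertex sets have union a set of exactly $n+1$ points of $\gamma_D$, such that $\mathcal{F}'$ is non-extendable.
   Context: $\gamma_D=\{(t,t^2,\dots,t^D):t\in\mathbb{R}\}$. A $D$-simplex on $\gamma_D$ is $\mathrm{conv}(\sigma)$ for $\sigma\subseteq\gamma_D$, $|\sigma|=D+1$. Simplices overlap if $\mathrm{conv}(\sigma)\cap\mathrm{conv}(\tau)\supsetneq\mathrm{conv}(\sigma\cap\tau)$. A collection of simplices on $\gamma_D$ whose vertex sets have union $A$ is non-extendable if there is no triangulation of $\mathrm{conv}(A)$ (geometric simplicial complex with union $\mathrm{conv}(A)$) all of whose vertices lie in $A$ and which contains every simplex of the collection. *)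

From HB Require Import structures.
From mathcomp Require Import all_boot all_order all_algebra finmap.
From mathcomp Require Import reals.
Unset Printing Implicit Defensive.
Import Order.TTheory GRing.Theory Num.Theory.
Local Open Scope ring_scope.
Local Open Scope fset_scope.

Section MomentCurve.
Context {R : realType}.

Definition gam (D : nat) (t : R) : 'rV[R]_D := \row_(i < D) t ^+ i.+1.

(* A finite set of points of gamma_D is encoded by its finite set of
   parameters s : {fset R} (t |-> gam D t is injective for D >= 1). *)

Definition inConv (D : nat) (s : {fset R}) (x : 'rV[R]_D) : Prop :=
  exists w : R -> R,
    [/\ forall t, t \in s -> 0 <= w t,
        \sum_(t <- s) w t = 1
      & \sum_(t <- s) w t *: gam D t = x].

Definition Dsimplex (D : nat) (s : {fset R}) : Prop := #|` s| = D.+1.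

Definition overlap (D : nat) (s t : {fset R}) : Prop :=
  exists x, [/\ inConv D s x, inConv D t x & ~ inConv D (s `&` t) x].

Definition nonoverlapping_Dsimplices (D : nat) (F : {fset {fset R}}) : Prop :=
  (forall s, s \in F -> Dsimplex D s) /\
  (forall s t, s \in F -> t \in F -> ~ overlap D s t).

Definition vertex_union (F : {fset {fset R}}) (A : {fset R}) : Prop :=
  forall t, t \in A <-> exists2 s, s \in F & t \in s.

(* K (given by the vertex sets of its simplices) is a triangulation of conv(A),
   i.e. a geometric simplicial complex with union conv(A), all of whose vertices
   lie in A.  Any <= D+1 distinct points of gamma_D are affinely independent, so
   the simplices are exactly conv(s) for nonempty s with #|s| <= D+1. *)
Definition triangulation (D : nat) (A : {fset R}) (K : {fset {fset R}}) : Prop :=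
  [/\ (forall s, s \in K -> [/\ s != fset0, s `<=` A & #|` s| <= D.+1]%N),
      (forall s u, s \in K -> u `<=` s -> u != fset0 -> u \in K),
      (forall s t, s \in K -> t \in K ->
         forall x, (inConv D s x /\ inConv D t x) <-> inConv D (s `&` t) x)
    & (forall x, inConv D A x <-> exists2 s, s \in K & inConv D s x)].

Definition non_extendable (D : nat) (F : {fset {fset R}}) (A : {fset R}) : Prop :=
  ~ exists K : {fset {fset R}}, triangulation D A K /\ F `<=` K.

End MomentCurve.

(* Add a point [p] of the moment curve beyond [A], together with the simplices
   [p |` B] over the facets [B] of [conv A] visible from [p].  A polynomial of
   degree at most [D] is an affine functional on the moment curve, and the
   nodal polynomials of the facets separate the new simplices from the old
   ones and from each other.  Gale's evenness criterion yields a covering of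
   the moment cone at [p] by the cones over visible facets, so in any
   triangulation of [conv (p |` A)] containing the new simplices every simplex
   through [p] lies in one of them.  The simplices avoiding [p] then
   triangulate [conv A] and would extend [F]. *)
From HB Require Import structures.
From mathcomp Require Import all_boot all_order all_algebra finmap.
From mathcomp Require Import reals.
From mathcomp Require Import ring lra zify.
Import Order.TTheory GRing.Theory Num.Theory.
Local Open Scope fset_scope.
Local Open Scope ring_scope.

Section Moments.
Context {R : realType}.
Implicit Types (s u : {fset R}) (w v : R -> R).

Definition moment s w (k : nat) : R := \sum_(a <- s) w a * a ^+ k.

Definition extend0 u w (a : R) : R := if a \in u then w a else 0.

Lemma moment0 s w : moment s w 0 = \sum_(a <- s) w a.
Proof. by apply: eq_bigr => a _; rewrite mulr1. Qed.

Lemma moment0_ge0 s w : {in s, forall a, 0 <= w a} -> 0 <= moment s w 0.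
Proof. by move=> w0; rewrite moment0 big_seq sumr_ge0. Qed.

Lemma eq_moment s w v k : {in s, w =1 v} -> moment s w k = moment s v k.
Proof. by move=> wv; apply: eq_fbigr => a /wv ->. Qed.

Lemma moment_fsetU1 a s w k :
  a \notin s -> moment (a |` s) w k = w a * a ^+ k + moment s w k.
Proof. exact: big_fsetU1. Qed.

Lemma moment_extend0 {u s} w k :
  u `<=` s -> moment s (extend0 u w) k = moment u w k.
Proof.
move=> us; rewrite /moment -(big_fset_incl _ us) => [|a _ /negbTE au].
  by apply: eq_fbigr => a au _; rewrite /extend0 au.
by rewrite /extend0 au mul0r.
Qed.

Lemma sum_horner_moment s w (q : {poly R}) n : (size q <= n)%N ->
  \sum_(a <- s) w a * q.[a] = \sum_(k < n) q`_k * moment s w k.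
Proof.
move=> sq; under eq_bigr => a _ do rewrite (horner_coef_wide _ sq) mulr_sumr.
rewrite exchange_big; apply: eq_bigr => k _.
by rewrite /moment mulr_sumr; apply: eq_bigr => a _; rewrite mulrCA.
Qed.

Lemma moment_subrXX s w p i : moment s w i - moment s w 0 * p ^+ i =
  - \sum_(j < i) p ^+ j * moment s (fun a => w a * (p - a)) (i.-1 - j).
Proof.
rewrite /moment mulr_suml -sumrB.
under [in RHS]eq_bigr do rewrite mulr_sumr.
rewrite exchange_big -sumrN; apply: eq_bigr => a _.
rewrite expr0 mulr1 -mulrBr subrXX !mulr_sumr -sumrN.
by apply: eq_bigr => j _; ring.
Qed.

End Moments.

Section ConvexHull.
Context {R : realType} {D : nat}.
Implicit Types (s t u : {fset R}) (w v : R -> R) (x : 'rV[R]_D).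

Definition conv_weights s w x :=
  [/\ {in s, forall a, 0 <= w a}, moment s w 0 = 1
    & forall i : 'I_D, moment s w i.+1 = x 0 i].

Lemma inConvP s x : inConv D s x <-> exists w, conv_weights s w x.
Proof.
have gamE w i : (\sum_(a <- s) w a *: gam D a) 0 i = moment s w i.+1.
  by rewrite summxE; apply: eq_bigr => a _; rewrite !mxE.
split=> -[w [w0 w1 wx]]; exists w; split=> //.
- by rewrite moment0.
- by move=> i; rewrite -gamE wx.
- by rewrite -moment0.
- by apply/rowP => i; rewrite gamE wx.
Qed.

Lemma conv_weights_moment {s t w v x} : conv_weights s w x -> conv_weights t v x ->
  forall k, (k <= D)%N -> moment s w k = moment t v k.
Proof.
move=> [_ w1 wx] [_ v1 vx] [|k] kD; first by rewrite w1 v1.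
by rewrite (wx (Ordinal kD)) (vx (Ordinal kD)).
Qed.

Lemma conv_weights_horner {s t w v x} (f : {poly R}) : (size f <= D.+1)%N ->
  conv_weights s w x -> conv_weights t v x ->
  \sum_(a <- s) w a * f.[a] = \sum_(a <- t) v a * f.[a].
Proof.
move=> sf wx vx; rewrite !(sum_horner_moment _ _ _ _ sf).
by apply: eq_bigr => k _; rewrite (conv_weights_moment wx vx) ?leq_ord.
Qed.

Lemma conv_weights_extend0 {u s w x} :
  u `<=` s -> conv_weights u w x -> conv_weights s (extend0 u w) x.
Proof.
move=> us [w0 w1 wx]; split=> [a _||i]; rewrite ?moment_extend0 //.
by rewrite /extend0; case: ifP => // /w0.
Qed.

Lemma inConv_subset {u s x} : u `<=` s -> inConv D u x -> inConv D s x.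
Proof.
by move=> us /inConvP[w /(conv_weights_extend0 us) wx]; apply/inConvP; exists (extend0 u w).
Qed.

Lemma conv_weights_restrict {u s w x} : u `<=` s -> conv_weights s w x ->
  {in s `\` u, forall a, w a = 0} -> inConv D u x.
Proof.
move=> us [w0 w1 wx] w_out; apply/inConvP; exists w.
have momE k : moment s w k = moment u w k.
  rewrite -(moment_extend0 w k us); apply: eq_moment => a sa; rewrite /extend0.
  by case: ifPn => // au; rewrite w_out // in_fsetD au.
split; rewrite -?momE //; first by move=> a /(fsubsetP us) /w0.
by move=> i; rewrite -momE.
Qed.

Lemma inConv_neq0 {s x} : inConv D s x -> s != fset0.
Proof.
move=> /inConvP[w [_ + _]]; apply: contra_eqN => /eqP ->.
by rewrite /moment big_seq_fset0 eq_sym oner_eq0.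
Qed.

Lemma triangulation0 : triangulation D fset0 (fset0 : {fset {fset R}}).
Proof. by split=> // x; split=> [/inConv_neq0|[]//]; rewrite eqxx. Qed.

End ConvexHull.

Section Nodal.
Context {R : realType}.
Implicit Types (s B : {fset R}) (w : R -> R).

Definition nodal B : {poly R} := \prod_(b <- B) ('X - b%:P).

Lemma horner_nodal B x : (nodal B).[x] = \prod_(b <- B) (x - b).
Proof. by rewrite horner_prod; apply: eq_bigr => b _; rewrite hornerXsubC. Qed.

Lemma size_nodal B : size (nodal B) = (#|` B|).+1.
Proof. exact: size_prod_XsubC. Qed.

Lemma nodal_root {B b} : b \in B -> (nodal B).[b] = 0.
Proof. by move=> bB; rewrite horner_nodal (big_fsetD1 b) //= subrr mul0r. Qed.

Lemma nodal_neq0 B x : x \notin B -> (nodal B).[x] != 0.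
Proof.
move=> xB; rewrite horner_nodal prodf_seq_neq0; apply/allP => b bB /=.
by rewrite subr_eq0; apply: contraNneq xB => ->.
Qed.

Lemma nodal_gt0 B x : {in B, forall b, b < x} -> 0 < (nodal B).[x].
Proof.
by move=> Bx; rewrite horner_nodal big_seq prodr_gt0 // => b /Bx; rewrite subr_gt0.
Qed.

Lemma nodal_fsetU1 m B x : m \notin B -> (nodal (m |` B)).[x] = (x - m) * (nodal B).[x].
Proof. by move=> mB; rewrite !horner_nodal big_fsetU1. Qed.

Lemma sum_nodal_root B w : \sum_(b <- B) w b * (nodal B).[b] = 0.
Proof. by rewrite big1_fset // => b bB _; rewrite nodal_root ?mulr0. Qed.

(* Lagrange interpolation: [nodal (s `\ a)] isolates the weight at [a]. *)
Lemma moment_inj {D : nat} {s w v} : (#|` s| <= D.+1)%N ->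
  (forall k, (k <= D)%N -> moment s w k = moment s v k) -> {in s, w =1 v}.
Proof.
move=> cs wv a sa; pose q := nodal (s `\ a).
have sq : (size q <= D.+1)%N by rewrite size_nodal; move: cs; rewrite (cardfsD1 a s) sa.
have sumE u : \sum_(b <- s) u b * q.[b] = u a * q.[a].
  by rewrite (big_fsetD1 a) //= sum_nodal_root addr0.
have qa : q.[a] != 0 by rewrite nodal_neq0 // fsetD11.
apply: (mulIf qa).
rewrite -!sumE !(sum_horner_moment _ _ _ _ sq); apply: eq_bigr => k _.
by rewrite wv ?leq_ord.
Qed.

Lemma conv_weights_gt0_subset {D : nat} {s t w} {x : 'rV[R]_D} : (#|` s| <= D.+1)%N ->
  conv_weights s w x -> {in s, forall a, 0 < w a} -> inConv D (s `&` t) x ->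
  s `<=` t.
Proof.
move=> cs wx w0 /inConvP[u /(conv_weights_extend0 (fsubsetIl s t)) ux].
have uw := moment_inj cs (conv_weights_moment ux wx).
apply/fsubsetP => a sa; move: (w0 a sa); rewrite -uw // /extend0.
by case: ifP => [|_]; [rewrite in_fsetI => /andP[] | rewrite ltxx].
Qed.

End Nodal.

Section Separation.
Context {R : realType} {D : nat}.
Implicit Types (s t : {fset R}) (w : R -> R) (x : 'rV[R]_D).

Lemma weights_eq0_at_neg {s w} (f : R -> R) : {in s, forall a, 0 <= w a} ->
  {in s, forall a, f a <= 0} -> \sum_(a <- s) w a * f a = 0 ->
  {in s, forall a, f a < 0 -> w a = 0}.
Proof.
move=> w0 f0 sum0 a sa fa.
have : \sum_(b <- s | b \in s) - (w b * f b) == 0 by rewrite -big_seq sumrN sum0 oppr0.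
rewrite psumr_eq0 => [/allP/(_ a sa)|b sb]; last by rewrite oppr_ge0 mulr_ge0_le0 ?w0 ?f0.
by rewrite sa oppr_eq0 mulf_eq0 (lt_eqF fa) orbF => /eqP.
Qed.

(* A polynomial of degree at most [D] is an affine functional on [gam D]. *)
Lemma inConvI_sep {s t} {f : {poly R}} {x} : (size f <= D.+1)%N ->
  {in s, forall a, f.[a] <= 0} -> {in s `\` t, forall a, f.[a] < 0} ->
  {in t, forall a, 0 <= f.[a]} ->
  inConv D s x -> inConv D t x -> inConv D (s `&` t) x.
Proof.
move=> sf fs fst ft /inConvP[w wx] /inConvP[v vx].
have [[w0 _ _] [v0 _ _]] := (wx, vx).
have sum0 : \sum_(a <- s) w a * f.[a] = 0.
  have le0 : \sum_(a <- s) w a * f.[a] <= 0.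
    by rewrite big_seq sumr_le0 // => a sa; rewrite mulr_ge0_le0 ?w0 ?fs.
  have ge0 : 0 <= \sum_(a <- t) v a * f.[a].
    by rewrite big_seq sumr_ge0 // => a ta; rewrite mulr_ge0 ?v0 ?ft.
  by apply/eqP; rewrite eq_le le0 (conv_weights_horner f sf wx vx).
apply: (conv_weights_restrict (fsubsetIl s t) wx) => a.
rewrite in_fsetD in_fsetI => /andP[+ sa]; rewrite sa /= => ta.
apply: (weights_eq0_at_neg (horner f) w0 _ sum0 a sa); first by move=> b /fs.
by apply: fst; rewrite in_fsetD ta.
Qed.

Lemma overlapC s t : overlap D s t -> overlap D t s.
Proof. by move=> [x [xs xt xst]]; exists x; split; rewrite // fsetIC. Qed.

Lemma sep_not_overlap {s t} (f : {poly R}) : (size f <= D.+1)%N ->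
  {in s, forall a, f.[a] <= 0} -> {in s `\` t, forall a, f.[a] < 0} ->
  {in t, forall a, 0 <= f.[a]} -> ~ overlap D s t.
Proof. by move=> sf fs fst ft [x [xs xt []]]; exact: (inConvI_sep sf fs fst ft xs xt). Qed.

End Separation.

Section GaleCover.
Context {R : realType}.
Implicit Types (A B S : {fset R}) (c : R -> R).

Lemma fset_maxP {A a0} : a0 \in A -> exists2 m, m \in A & {in A, forall a, a <= m}.
Proof.
move=> Aa0; exists (\big[Num.max/a0]_(a <- A) a) => [|a aA].
  rewrite big_seq; apply: (big_ind (fun y => y \in A)) => // y z.
  by rewrite maxElt; case: ifP.
exact: (@le_bigmax_seq _ _ _ A a0 a xpredT id aA isT).
Qed.

Lemma fset_minP {A a0} : a0 \in A -> exists2 m, m \in A & {in A, forall a, m <= a}.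
Proof.
move=> Aa0; exists (\big[Num.min/a0]_(a <- A) a) => [|a aA].
  rewrite big_seq; apply: (big_ind (fun y => y \in A)) => // y z.
  by rewrite minElt; case: ifP.
exact: (@ge_bigmin_seq _ _ _ A a0 a xpredT id aA isT).
Qed.

(* For [k = d.+1], [nodal B] is an affine functional in [a, ..., a ^+ d.+1]:
   the [B] are the lower ([neg = false]) or upper facets of the cyclic
   polytope on [A], and either family projects to a triangulation in
   dimension [d]. *)
Definition gale_subset (neg : bool) A B (k : nat) : Prop :=
  [/\ B `<=` A, #|` B| = k & {in A `\` B, forall a, 0 < (-1) ^+ neg * (nodal B).[a]}].

Definition gale_cover (d : nat) (neg : bool) A : Prop :=
  forall c, {in A, forall a, 0 <= c a} ->
  exists2 B, gale_subset neg A B d.+1 &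
    exists2 g, {in B, forall b, 0 <= g b} &
      forall i, (i <= d)%N -> moment B g i = moment A c i.

(* The mass [moment S c 0 - moment B beta 0] put at the apex [p] may be negative. *)
Definition apex_cover (d : nat) (neg : bool) S (p : R) : Prop :=
  forall c, {in S, forall a, 0 <= c a} ->
  exists2 B, gale_subset neg S B d &
    exists2 beta, {in B, forall b, 0 <= beta b} &
      forall i, (i <= d)%N ->
        moment S c i = (moment S c 0 - moment B beta 0) * p ^+ i + moment B beta i.

Lemma gale_subset_fsetU1 neg S B m k : {in S, forall a, a < m} ->
  gale_subset (~~ neg) S B k -> gale_subset neg (m |` S) (m |` B) k.+1.
Proof.
move=> Sm [BS cB sB]; have mB : m \notin B by apply/negP => /(fsubsetP BS)/Sm; rewrite ltxx.
split; first by rewrite fsetUS.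
  by rewrite cardfsU1 mB cB.
move=> a; rewrite in_fsetD !in_fset1U negb_or => /andP[/andP[am aB]].
rewrite (negbTE am) /= => aS.
rewrite nodal_fsetU1 // mulrCA -[a - m]opprB mulNr -mulrN -mulNr -signrN mulr_gt0 //.
  by rewrite subr_gt0 Sm.
by rewrite sB // in_fsetD aB.
Qed.

Lemma gale_subset_ground_fsetU1 S B m k : {in S, forall a, a < m} ->
  gale_subset false S B k -> gale_subset false (m |` S) B k.
Proof.
move=> Sm [BS cB sB]; split=> //; first by rewrite (fsubset_trans BS) ?fsubsetU1.
move=> a; rewrite in_fsetD in_fset1U => /andP[aB /orP[/eqP ->|aS]].
  by rewrite expr0 mul1r nodal_gt0 // => b /(fsubsetP BS)/Sm.
by rewrite sB // in_fsetD aB.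
Qed.

(* Integrate [nodal B] against both sides of the moment identity: it vanishes on [B]
   and is positive at [m]. *)
Lemma apex_mass_sign {d neg S B m c beta} : {in S, forall a, a < m} ->
  {in S, forall a, 0 <= c a} -> gale_subset neg S B d.+1 ->
  (forall i, (i <= d.+1)%N ->
     moment S c i = (moment S c 0 - moment B beta 0) * m ^+ i + moment B beta i) ->
  0 <= (-1) ^+ neg * (moment S c 0 - moment B beta 0).
Proof.
move=> Sm c0 [BS cB sB]; set M := _ - _ => cE.
have sf : (size (nodal B) <= d.+2)%N by rewrite size_nodal cB.
have sumE : \sum_(a <- S) c a * (nodal B).[a] = M * (nodal B).[m].
  rewrite (sum_horner_moment _ _ _ _ sf) (horner_coef_wide m sf) mulr_sumr.
  transitivity (\sum_(k < d.+2)
                 (M * ((nodal B)`_k * m ^+ k) + (nodal B)`_k * moment B beta k)).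
    by apply: eq_bigr => k _; rewrite cE ?leq_ord //; ring.
  by rewrite big_split /= -(sum_horner_moment _ _ _ _ sf) sum_nodal_root addr0.
have sum_ge0 : 0 <= (-1) ^+ neg * \sum_(a <- S) c a * (nodal B).[a].
  rewrite mulr_sumr big_seq sumr_ge0 // => a aS.
  have [aB|aB] := boolP (a \in B); first by rewrite nodal_root // !mulr0.
  by rewrite mulrCA mulr_ge0 ?c0 // ltW // sB // in_fsetD aB.
by move: sum_ge0; rewrite sumE mulrA pmulr_lge0 // nodal_gt0 // => b /(fsubsetP BS)/Sm.
Qed.

Lemma apex_cover_gale {d neg S p} : {in S, forall a, a < p} ->
  gale_cover d neg S -> apex_cover d.+1 neg S p.
Proof.
move=> Sp cov c c0.
have [|B [BS cB sB] [g g0 gE]] := cov (fun a => c a * (p - a)).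
  by move=> a aS; rewrite mulr_ge0 ?c0 // subr_ge0 ltW ?Sp.
have pB b : b \in B -> 0 < p - b by move=> /(fsubsetP BS)/Sp; rewrite subr_gt0.
exists B => //; exists (fun b => g b / (p - b)) => [b bB|i id].
  by rewrite divr_ge0 ?g0 // ltW ?pB.
have momE : moment S c i - moment S c 0 * p ^+ i =
  moment B (fun b => g b / (p - b)) i - moment B (fun b => g b / (p - b)) 0 * p ^+ i.
  rewrite !moment_subrXX; congr (- _); apply: eq_bigr => j _; congr (_ * _).
  rewrite -gE; last by lia.
  by apply: eq_moment => b bB /=; rewrite divfK ?gt_eqF ?pB.
by rewrite -[moment S c i](subrK (moment S c 0 * p ^+ i)) momE; ring.
Qed.

Lemma gale_cover_card d neg A : #|` A| = d.+1 -> gale_cover d neg A.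
Proof.
move=> cA c c0; exists A; last by exists c.
by split=> // a; rewrite in_fsetD andNb.
Qed.

Lemma gale_cover0 {A a0} neg : a0 \in A -> gale_cover 0 neg A.
Proof.
move=> Aa0 c c0; have [M MA AM] := fset_maxP Aa0; have [m mA Am] := fset_minP Aa0.
exists [fset (if neg then M else m)].
  split; rewrite ?cardfs1 ?fsub1set //; first by case: neg.
  move=> a; rewrite in_fsetD in_fset1 horner_nodal big_seq_fset1 => /andP[aMm aA].
  case: neg aMm => /= aMm; rewrite ?mulN1r ?mul1r ?oppr_gt0 ?subr_lt0 ?subr_gt0.
    by rewrite lt_neqAle aMm AM.
  by rewrite lt_neqAle eq_sym aMm Am.
exists (fun=> moment A c 0) => [b _|[]// _]; first exact: moment0_ge0.
by rewrite /moment big_seq_fset1 !mulr1.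
Qed.

(* Either [m |` B'] works, or the mass at [m] would be negative; then [neg]
   is [false] and a convex combination of [c] and [beta] lives on [S]. *)
Lemma gale_cover_fsetU1 d neg S m : {in S, forall a, a < m} ->
  gale_cover d (~~ neg) S -> gale_cover d.+1 neg S -> gale_cover d.+1 neg (m |` S).
Proof.
move=> Sm covN covS c c0.
have mS : m \notin S by apply/negP => /Sm; rewrite ltxx.
have cS : {in S, forall a, 0 <= c a} by move=> a aS; rewrite c0 // fset1Ur.
have [B' B'gale [beta beta0 cE]] := apex_cover_gale Sm covN c cS.
have sgn := apex_mass_sign Sm cS B'gale cE.
have [B'S cB' _] := B'gale; have mB' : m \notin B' by apply: contra mS; apply: fsubsetP.
set C := moment S c 0 in cE sgn *; set K := moment B' beta 0 in cE sgn *.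
have momA i : moment (m |` S) c i = c m * m ^+ i + moment S c i by rewrite moment_fsetU1.
have [Q0|Q0] := lerP 0 (c m + C - K).
  exists (m |` B'); first exact: gale_subset_fsetU1.
  exists (fun a => if a == m then c m + C - K else beta a) => [b|i id].
    by rewrite in_fset1U; case: eqP => // _ /beta0.
  rewrite moment_fsetU1 // eqxx momA cE // (@eq_moment _ _ _ beta); first ring.
  by move=> b bB'; case: eqP => // bm; rewrite -bm bB' in mB'.
have cm0 : 0 <= c m by rewrite c0 // fset1U1.
have KC : 0 < K - C by lra.
have negF : neg = false.
  by apply/negbTE/negP => negT; move: sgn; rewrite negT /= expr0 mul1r; lra.
pose th := c m / (K - C).
have th01 : 0 <= th <= 1.
  by rewrite /th divr_ge0 ?(ltW KC) //= ler_pdivrMr // mul1r; lra.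
pose e a := th * extend0 B' beta a + (1 - th) * c a.
have [|B Bgale [g g0 gE]] := covS e.
  move=> a aS; rewrite /e /extend0 addr_ge0 // mulr_ge0 ?cS ?subr_ge0 //; try lra.
  by case: ifP => // /beta0.
rewrite negF in Bgale *; exists B; first exact: gale_subset_ground_fsetU1.
exists g => // i id; rewrite gE // momA.
have -> : moment S e i = th * moment B' beta i + (1 - th) * moment S c i.
  rewrite -(moment_extend0 beta i B'S) /moment !mulr_sumr -big_split.
  by apply: eq_bigr => a _; rewrite /e mulrDl !mulrA.
have thE : th * (K - C) = c m by rewrite /th divfK ?gt_eqF.
by rewrite cE // -thE; ring.
Qed.

Lemma gale_cover_lt d neg A : (d < #|` A|)%N -> gale_cover d neg A.
Proof.
move cA: #|` A| => n; elim: n => // n IH in d neg A cA *.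
rewrite ltnS leq_eqVlt => /orP[/eqP dn|dn]; first by apply: gale_cover_card; rewrite cA dn.
have [a0 Aa0] : exists a0, a0 \in A.
  by case: (fset_0Vmem A) => [A0|[a0]]; [rewrite A0 cardfs0 in cA | exists a0].
have [m mA Am] := fset_maxP Aa0.
have Sm : {in A `\ m, forall a, a < m}.
  by move=> a; rewrite in_fsetD1 => /andP[am /Am]; rewrite lt_neqAle am.
have cS : #|` A `\ m| = n by move: cA; rewrite (cardfsD1 m A) mA add1n => -[].
rewrite -(fsetD1K mA); case: d dn => [_|d dn]; first exact: (gale_cover0 neg (fset1U1 _ _)).
by apply: gale_cover_fsetU1 => //; apply: IH => //; apply: ltnW.
Qed.

End GaleCover.

Section Beyond.
Context {R : realType}.
Implicit Types (A B s : {fset R}) (F K : {fset {fset R}}).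

(* The facets of [conv (gam D @ A)] visible from every point of [gam D] beyond
   [A]: [nodal B] is an affine functional on [gam D], nonpositive on [A] and
   positive beyond it. *)
Definition visible_facets (D : nat) A : {fset {fset R}} :=
  [fset B in fpowerset A |
    (#|` B| == D) && all (fun a => (a \in B) || ((nodal B).[a] < 0)) A].

Definition apex_simplices (D : nat) A (p : R) : {fset {fset R}} :=
  [fset p |` B | B in visible_facets D A].

Lemma visible_facetsP D A B : B \in visible_facets D A <->
  [/\ B `<=` A, #|` B| = D & {in A `\` B, forall a, (nodal B).[a] < 0}].
Proof.
rewrite !inE fpowersetE /=; split.
  move=> /andP[BA /andP[/eqP cB /allP Bneg]]; split=> // a.
  by rewrite in_fsetD => /andP[/negbTE aB /Bneg]; rewrite aB.
move=> [BA cB Bneg]; rewrite BA cB eqxx; apply/allP => a aA /=.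
by case: (boolP (a \in B)) => //= aB; rewrite Bneg // in_fsetD aB.
Qed.

Lemma visible_facet_gale D A B : B \in visible_facets D A <-> gale_subset true A B D.
Proof.
rewrite visible_facetsP; split=> -[BA cB Bneg]; split=> // a /Bneg;
  by rewrite expr1 mulN1r oppr_gt0.
Qed.

Variables (D : nat) (A : {fset R}) (p : R).
Hypotheses (D_gt0 : (0 < D)%N) (D_le_A : (D <= #|` A|)%N).
Hypothesis A_lt_p : {in A, forall a, a < p}.

Lemma visible_facetE {B} : B \in visible_facets D A ->
  [/\ B `<=` A, #|` B| = D, p \notin B,
      {in A, forall a, (nodal B).[a] <= 0} & 0 < (nodal B).[p]].
Proof.
move=> /visible_facetsP[BA cB Bneg]; split=> //.
- by apply/negP => /(fsubsetP BA)/A_lt_p; rewrite ltxx.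
- move=> a aA; have [aB|aB] := boolP (a \in B); first by rewrite nodal_root.
  by rewrite ltW // Bneg // in_fsetD aB.
- by apply: nodal_gt0 => b /(fsubsetP BA)/A_lt_p.
Qed.

Lemma apex_cover_beyond : apex_cover D true A p.
Proof.
rewrite -(prednK D_gt0); apply: (apex_cover_gale A_lt_p); apply: gale_cover_lt.
by rewrite prednK.
Qed.

Lemma visible_facet_exists : exists B, B \in visible_facets D A.
Proof.
have [|B /visible_facet_gale BV _] := apex_cover_beyond (fun=> 0); last by exists B.
by move=> a _.
Qed.

Lemma apex_simplex_in {B} : B \in visible_facets D A -> p |` B \in apex_simplices D A p.
Proof. by move=> BV; apply/imfsetP; exists B. Qed.

Lemma apex_not_overlap s B : s `<=` A -> B \in visible_facets D A ->
  ~ overlap D s (p |` B).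
Proof.
move=> sA BV; have [BA cB pB BA_le0 Bp_gt0] := visible_facetE BV.
apply: (sep_not_overlap (nodal B)); first by rewrite size_nodal cB.
- by move=> a /(fsubsetP sA); apply: BA_le0.
- move=> a; rewrite in_fsetD in_fset1U negb_or => /andP[/andP[_ aB] /(fsubsetP sA) aA].
  by have /visible_facetsP[_ _ ->] := BV; rewrite // in_fsetD aB.
- by move=> a; rewrite in_fset1U => /orP[/eqP->|/nodal_root->]; rewrite // ltW.
Qed.

(* [nodal B] alone is positive at the common vertex [p]; [g] vanishes there. *)
Lemma apex_not_overlap2 B B' : B \in visible_facets D A -> B' \in visible_facets D A ->
  ~ overlap D (p |` B) (p |` B').
Proof.
move=> BV B'V; have [BA cB pB BA_le0 Bp_gt0] := visible_facetE BV.
have [B'A cB' pB' B'A_le0 B'p_gt0] := visible_facetE B'V.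
pose g := (nodal B).[p] *: nodal B' - (nodal B').[p] *: nodal B.
have gE a : g.[a] = (nodal B).[p] * (nodal B').[a] - (nodal B').[p] * (nodal B).[a].
  by rewrite !(hornerE, hornerZ).
apply: (sep_not_overlap g).
- rewrite (leq_trans (size_polyD _ _)) // geq_max size_polyN.
  by rewrite !(leq_trans (size_scale_leq _ _)) ?size_nodal ?cB ?cB'.
- move=> a; rewrite in_fset1U gE => /orP[/eqP->|aB]; first by rewrite mulrC subrr.
  rewrite (nodal_root aB) mulr0 subr0 mulr_ge0_le0 ?(ltW Bp_gt0) //.
  exact/B'A_le0/(fsubsetP BA).
- move=> a; rewrite in_fsetD !in_fset1U negb_or => /andP[/andP[ap aB']].
  rewrite (negbTE ap) /= => aB; rewrite gE (nodal_root aB) mulr0 subr0 pmulr_rlt0 //.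
  by have /visible_facetsP[_ _ ->] := B'V; rewrite // in_fsetD aB' (fsubsetP BA).
- move=> a; rewrite in_fset1U gE => /orP[/eqP->|aB']; first by rewrite mulrC subrr.
  rewrite (nodal_root aB') mulr0 sub0r oppr_ge0 mulr_ge0_le0 ?(ltW B'p_gt0) //.
  exact/BA_le0/(fsubsetP B'A).
Qed.

(* The point of [conv s] with weight [eps] at each vertex other than [p] lies,
   for small [eps], in the simplex [p |` B] of some visible facet [B]. *)
Lemma apex_simplex_interior_point {s} : s `<=` p |` A -> p \in s ->
  exists2 B, B \in visible_facets D A & exists (z : 'rV[R]_D) w,
    [/\ conv_weights s w z, {in s, forall a, 0 < w a} & inConv D (p |` B) z].
Proof.
move=> spA ps; have S0A : s `\ p `<=` A.
  apply/fsubsetP => a; rewrite in_fsetD1 => /andP[ap /(fsubsetP spA)].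
  by rewrite in_fset1U (negbTE ap).
pose c := extend0 (s `\ p) (fun=> 1).
have c0 : {in A, forall a, 0 <= c a} by move=> a _; rewrite /c /extend0; case: ifP.
have [B /visible_facet_gale BV [beta beta0 cE]] := apex_cover_beyond c c0.
have [_ _ pB _ _] := visible_facetE BV.
set N := moment A c 0 in cE; set M := moment B beta 0 in cE.
have N0 : 0 <= N by apply: moment0_ge0.
have M0 : 0 <= M by apply: moment0_ge0.
pose eps := (N + M + 1)^-1.
have eps0 : 0 < eps by rewrite invr_gt0; lra.
have epsN : eps * N < 1 by rewrite mulrC ltr_pdivrMr; lra.
have epsM : eps * M < 1 by rewrite mulrC ltr_pdivrMr; lra.
pose w a := if a == p then 1 - eps * N else eps.
pose v a := if a == p then 1 - eps * M else eps * beta a.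
have momw k : moment s w k = (1 - eps * N) * p ^+ k + eps * moment A c k.
  rewrite -(fsetD1K ps) moment_fsetU1 ?fsetD11 // /w eqxx; congr (_ + _).
  rewrite /c moment_extend0 // [RHS]mulr_sumr; apply: eq_fbigr => a + _.
  by rewrite in_fsetD1 => /andP[/negbTE -> _]; rewrite mul1r.
have momv k : moment (p |` B) v k = (1 - eps * M) * p ^+ k + eps * moment B beta k.
  rewrite moment_fsetU1 // /v eqxx; congr (_ + _).
  rewrite [RHS]mulr_sumr; apply: eq_fbigr => b bB _.
  by rewrite ifN ?mulrA //; apply: contraNneq pB => <-.
have vwE k : (k <= D)%N -> moment (p |` B) v k = moment s w k.
  by move=> kD; rewrite momw momv cE // -/N -/M; ring.
pose z : 'rV[R]_D := \row_(i < D) moment s w i.+1.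
have w0 : {in s, forall a, 0 < w a} by move=> a _; rewrite /w; case: eqP; lra.
have wz : conv_weights s w z.
  split=> [a /w0/ltW //||i]; last by rewrite mxE.
  by rewrite momw expr0 mulr1 -/N; ring.
exists B => //; exists z, w; split=> //; apply/inConvP; exists v.
split=> [a||i]; rewrite ?vwE ?mxE //; last by have [_ ->] := wz.
by rewrite in_fset1U /v; case: eqP => [_ _|_ /= /beta0]; nra.
Qed.

Lemma apex_star {K} : triangulation D (p |` A) K -> apex_simplices D A p `<=` K ->
  forall s, s \in K -> p \in s -> exists2 B, B \in visible_facets D A & s `<=` p |` B.
Proof.
move=> [Ksub _ Kmeet _] apexK s sK ps; have [_ spA cs] := Ksub s sK.
have [B BV [z [w [wz w0 zB]]]] := apex_simplex_interior_point spA ps.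
exists B => //; apply: (conv_weights_gt0_subset cs wz w0).
apply: (Kmeet _ _ sK (fsubsetP apexK _ (apex_simplex_in BV)) z).1.
by split=> //; apply/inConvP; exists w.
Qed.

Lemma apex_triangulation_inConvI {K s x} : triangulation D (p |` A) K ->
  apex_simplices D A p `<=` K -> s \in K -> inConv D A x -> inConv D s x ->
  inConv D (s `&` A) x.
Proof.
move=> KT apexK sK xA xs; have [Ksub _ _ _] := KT; have [_ spA _] := Ksub s sK.
have [ps|ps] := boolP (p \in s); last first.
  suff /fsetIidPl -> : s `<=` A by [].
  apply/fsubsetP => a sa; move: (fsubsetP spA a sa); rewrite in_fset1U.
  by case: eqP => [ap|] //=; rewrite -ap sa in ps.
have [B BV spB] := apex_star KT apexK _ sK ps.
have [_ cB _ BA_le0 Bp_gt0] := visible_facetE BV.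
apply: (inConvI_sep (f := - nodal B)) xs xA; first by rewrite size_polyN size_nodal cB.
- move=> a /(fsubsetP spB); rewrite hornerN oppr_le0 in_fset1U.
  by case/orP=> [/eqP->|/nodal_root->]; rewrite // ltW.
- move=> a; rewrite in_fsetD => /andP[aA /(fsubsetP spA)].
  by rewrite in_fset1U (negbTE aA) orbF => /eqP->; rewrite hornerN oppr_lt0.
- by move=> a /BA_le0; rewrite hornerN oppr_ge0.
Qed.

Lemma triangulation_restrict K : triangulation D (p |` A) K ->
  apex_simplices D A p `<=` K -> triangulation D A [fset s in K | s `<=` A].
Proof.
move=> KT apexK; have [Ksub Kface Kmeet Kcover] := KT.
have inKA s : (s \in [fset s in K | s `<=` A]) = (s \in K) && (s `<=` A).
  by rewrite !inE.
split=> [s|s u|s t|x].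
- by rewrite inKA => /andP[/Ksub[? ? ?] sA].
- rewrite !inKA => /andP[sK sA] us u0.
  by rewrite (Kface s) ?(fsubset_trans us sA).
- by rewrite !inKA => /andP[sK _] /andP[tK _]; apply: Kmeet.
split=> [xA|[s]]; last by rewrite inKA => /andP[_ sA]; apply: inConv_subset.
have [s sK xs] := (Kcover x).1 (inConv_subset (fsubsetU1 _ _) xA).
have xsA := apex_triangulation_inConvI KT apexK sK xA xs.
exists (s `&` A) => //; rewrite inKA fsubsetIr andbT.
by apply: (Kface s) => //; [exact: fsubsetIl | exact: inConv_neq0 xsA].
Qed.

Lemma nonoverlapping_apex F : nonoverlapping_Dsimplices D F ->
  (forall s, s \in F -> s `<=` A) ->
  nonoverlapping_Dsimplices D (F `|` apex_simplices D A p).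
Proof.
move=> [Fsimplex Fdisj] FA; split.
  move=> s; rewrite in_fsetU => /orP[/Fsimplex //|/imfsetP[B /= BV ->]].
  by have [_ cB pB _ _] := visible_facetE BV; rewrite /Dsimplex cardfsU1 pB cB.
move=> s t; rewrite !in_fsetU.
case/orP=> [sF|/imfsetP[B /= BV ->]]; case/orP=> [tF|/imfsetP[B' /= B'V ->]].
- exact: Fdisj.
- exact: apex_not_overlap (FA s sF) B'V.
- by move/overlapC; apply: apex_not_overlap (FA t tF) BV.
- exact: apex_not_overlap2.
Qed.

Lemma vertex_union_apex F : vertex_union F A ->
  vertex_union (F `|` apex_simplices D A p) (p |` A).
Proof.
move=> FvA a; rewrite in_fset1U; split.
  case/orP=> [/eqP->|/FvA[s sF sa]]; last by exists s; rewrite // in_fsetU sF.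
  have [B BV] := visible_facet_exists.
  by exists (p |` B); rewrite ?fset1U1 // in_fsetU apex_simplex_in ?orbT.
case=> s; rewrite in_fsetU => /orP[sF sa|/imfsetP[B /= BV ->]].
  by apply/orP; right; apply/FvA; exists s.
have [BA _ _ _ _] := visible_facetE BV.
by rewrite in_fset1U => /orP[->//|/(fsubsetP BA)->]; rewrite orbT.
Qed.

Lemma non_extendable_apex F : non_extendable D F A ->
  (forall s, s \in F -> s `<=` A) ->
  non_extendable D (F `|` apex_simplices D A p) (p |` A).
Proof.
move=> Fne FA [K [KT FK]]; apply: Fne.
have apexK := fsubset_trans (fsubsetUr _ _) FK.
exists [fset s in K | s `<=` A]; split; first exact: triangulation_restrict.
apply/fsubsetP => s sF; rewrite !inE FA // andbT.
by apply: (fsubsetP FK); rewrite in_fsetU sF.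
Qed.

End Beyond.

Theorem proposition4p2 (R : realType) (D : nat) (F : {fset {fset R}})
    (A : {fset R}) (n : nat) :
  (1 <= D)%N ->
  nonoverlapping_Dsimplices D F ->
  vertex_union F A ->
  #|` A| = n ->
  non_extendable D F A ->
  exists (F' : {fset {fset R}}) (A' : {fset R}),
    [/\ F `<=` F',
        nonoverlapping_Dsimplices D F',
        vertex_union F' A',
        #|` A'| = n.+1
      & non_extendable D F' A'].
Proof.
move=> D_gt0 Fno FvA cA Fne.
have FsubA s : s \in F -> s `<=` A by move=> sF; apply/fsubsetP => a sa; apply/FvA; exists s.
have [F0|[s0 s0F]] := fset_0Vmem F.
  have A0 : A = fset0 by apply/fsetP => a; rewrite inE; apply/idP => /FvA[s]; rewrite F0.
  by case: Fne; exists fset0; rewrite F0 A0; split; [apply: triangulation0 |].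
have D_le_A : (D <= #|` A|)%N.
  have [Fsimplex _] := Fno; rewrite ltnW // -(Fsimplex s0 s0F).
  exact: fsubset_leq_card (FsubA s0 s0F).
have [a0 Aa0] : exists a0, a0 \in A.
  case: (fset_0Vmem A) => [A0|[a0]]; last by exists a0.
  by rewrite A0 cardfs0 leqn0 in D_le_A; lia.
have [m _ Am] := fset_maxP Aa0; pose p := m + 1.
have A_lt_p : {in A, forall a, a < p} by move=> a /Am; rewrite /p; lra.
have pA : p \notin A by apply/negP => /A_lt_p; rewrite ltxx.
exists (F `|` apex_simplices D A p), (p |` A); split.
- exact: fsubsetUl.
- exact: nonoverlapping_apex.
- exact: vertex_union_apex.
- by rewrite cardfsU1 pA cA.
- exact: non_extendable_apex.
Qed.
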